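(* Let $q\ge4$ be even and let $B(n,m)$ be the number of $m$-RLL strings in $\Sigma_q^n$. If $m\ge\lceil\log_{q/2}n\rceil+1$, then $B(n,m)\ge q^n-2q^{n-1}\ge q^n/2$.
   Context: $\Sigma_q=\{0,\dots,q-1\}$, $\boldsymbol{x}_{[a,b]}=x_a\cdots x_b$. The complement on $\Sigma_q$ is $\overline{a}=a+1$ if $a$ is even and $\overline{a}=a-1$ if $a$ is odd (so $\{a,\overline a\}=\{2\lfloor a/2\rfloor,2\lfloor a/2\rfloor+1\}$). In $\boldsymbol{x}\in\Sigma_q^n$, a substring $\boldsymbol{x}_{[i,j]}$ ($i\le j$) is a run if all its entries lie in $\{x_i,\overline{x_i}\}$ and it is maximal, i.e. $x_{i-1}\notin\{x_i,\overline{x_i}\}$ when $i>1$ and $x_{j+1}\notin\{x_i,\overline{x_i}\}$ when $j<n$. A string is $m$-runlength-limited ($m$-RLL) if each of its runs has length at most $m$. *)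

From mathcomp Require Import all_boot all_order all_algebra.
Set Implicit Arguments. Unset Strict Implicit. Unset Printing Implicit Defensive.

(* Symbols of Sigma_q are 'I_q; strings in Sigma_q^n are n.-tuple 'I_q.
   Positions are 0-based: x_k (paper, 1-based) is [seq val a | a <- x]`_(k-1). *)

Definition sym (q n : nat) (x : n.-tuple 'I_q) (k : nat) : nat :=
  nth 0 [seq val a | a <- x] k.

Definition compl (a : nat) : nat := if odd a then a.-1 else a.+1.

Definition in_pair (a b : nat) : bool := (b == a) || (b == compl a).

Definition is_run (q n : nat) (x : n.-tuple 'I_q) (i j : nat) : bool :=
  [&& i <= j, j < n,
      all (fun k => in_pair (sym x i) (sym x k)) (iota i (j - i + 1)),
      (i == 0) || ~~ in_pair (sym x i) (sym x i.-1) &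
      (j.+1 == n) || ~~ in_pair (sym x i) (sym x j.+1)].

Definition rll (q n m : nat) (x : n.-tuple 'I_q) : bool :=
  [forall i : 'I_n, forall j : 'I_n, is_run x i j ==> (j - i + 1 <= m)].

Definition B (q n m : nat) : nat := #|[set x : n.-tuple 'I_q | rll m x]|.

From mathcomp Require Import all_boot all_order all_algebra zify lra.
Import GRing.Theory Num.Theory.

(* A string that is not m-RLL contains a run of length m + 1 starting at some
   position i < n - m: x_i is arbitrary and x_(i+1), ..., x_(i+m) lie in
   {x_i, compl x_i}.  A union bound over i and x_i counts at most
   (n - m) q 2^m q^(n-m-1) = (n - m) q^n / p^m such strings, where q = 2p.
   The choice of m gives n <= p^(m-1), so this is at most q^n / p = 2 q^(n-1),
   which is at most q^n / 2 as q >= 4. *)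

Lemma card_tuple_family {T : finType} {n} (C : 'I_n -> pred T) :
  #|[set x : n.-tuple T | [forall k, tnth x k \in C k]]| = \prod_(k < n) #|C k|.
Proof.
rewrite -(card_imset _ (can_inj (@finfun_of_tupleK _ _))).
have -> : \prod_(k < n) #|C k| = #|family C|.
  by rewrite card_family foldrE big_image.
apply: eq_card => f; apply/imsetP/familyP => [[x] | Cf].
  by rewrite inE => /forallP Cx -> k; rewrite ffunE.
exists (tuple_of_finfun f); last by rewrite tuple_of_finfunK.
by rewrite inE; apply/forallP => k; rewrite tnth_map tnth_ord_tuple.
Qed.

Lemma card_bigcup_le {I T : finType} (P : pred I) (A : I -> {set T}) :
  #|\bigcup_(i | P i) A i| <= \sum_(i | P i) #|A i|.
Proof.
elim/big_ind2: _ => [|a X b Y leXa leYb|//]; first by rewrite cards0.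
exact: leq_trans (leq_card_setU X Y) (leq_add leXa leYb).
Qed.

Lemma card_in_pair q (a : 'I_q) : #|[pred b : 'I_q | in_pair a b]| <= 2.
Proof.
rewrite cardE -(size_map val); apply: (@uniq_leq_size _ _ [:: val a; compl a]).
  by rewrite (map_inj_uniq val_inj) enum_uniq.
move=> c /mapP[b]; rewrite mem_enum inE /in_pair => /orP[] /eqP b_eq ->;
  by rewrite /= b_eq !inE eqxx ?orbT.
Qed.

Lemma sym_tnth q n (x : n.-tuple 'I_q) (k : 'I_n) : sym x k = tnth x k.
Proof. by rewrite /sym (nth_map (tnth x k)) ?size_tuple // -tnth_nth. Qed.

Section LongRuns.

Variables q n m : nat.

Definition run_pattern (i : nat) (a : 'I_q) (k : 'I_n) : pred 'I_q :=
  if val k == i then pred1 a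
  else if i < k <= i + m then [pred b : 'I_q | in_pair a b] else predT.

Definition long_run_at i a : {set n.-tuple 'I_q} :=
  [set x | [forall k, tnth x k \in run_pattern i a k]].

Definition run_weight (i k : nat) : nat :=
  if k == i then 1 else if i < k <= i + m then 2 else q.

Lemma card_run_pattern i a k : #|run_pattern i a k| <= run_weight i k.
Proof.
rewrite /run_pattern /run_weight; case: eqP => _; first by rewrite card1.
case: ifP => _; first exact: card_in_pair.
by rewrite -[q in _ <= q]card_ord max_card.
Qed.

Lemma prod_run_weight i : i + m < n ->
  \prod_(k < n) run_weight i k = 2 ^ m * q ^ (n - m - 1).
Proof.
move=> lt_im_n.
have const_on c l r : (forall k, l <= k < r -> run_weight i k = c) ->
    \prod_(l <= k < r) run_weight i k = c ^ (r - l).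
  by move=> wk; rewrite -prod_nat_const_nat; apply: eq_big_nat.
rewrite -(big_mkord xpredT) (big_cat_nat (leq0n i)) /=; last lia.
rewrite [X in _ * X]big_ltn; last lia.
rewrite [X in _ * (_ * X)](@big_cat_nat _ _ _ (i.+1 + m)) /=; [|lia|lia].
have [lo mid hi] : [/\ forall k, 0 <= k < i -> run_weight i k = q,
    forall k, i.+1 <= k < i.+1 + m -> run_weight i k = 2 &
    forall k, i.+1 + m <= k < n -> run_weight i k = q].
  by split=> k k_in; rewrite /run_weight; repeat case: ifP; lia.
rewrite (const_on q _ _ lo) (const_on 2 _ _ mid) (const_on q _ _ hi) /run_weight eqxx.
rewrite mul1n subn0 addKn mulnCA -expnD; congr (_ * q ^ _); lia.
Qed.

Lemma card_long_run_at i a : i + m < n ->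
  #|long_run_at i a| <= 2 ^ m * q ^ (n - m - 1).
Proof.
move=> lt_im_n; rewrite card_tuple_family -(prod_run_weight _ lt_im_n).
by apply: leq_prod => k _; apply: card_run_pattern.
Qed.

Lemma not_rll_long_run (x : n.-tuple 'I_q) :
  ~~ rll m x -> exists (i : 'I_(n - m)) (a : 'I_q), x \in long_run_at i a.
Proof.
case/forallPn=> i /forallPn[j]; rewrite negb_imply -ltnNge => /andP[run_ij long_ij].
case/and5P: run_ij => _ _ all_pair _ _.
have lt_i : i < n - m by move: (ltn_ord i) (ltn_ord j); lia.
exists (Ordinal lt_i), (tnth x i); rewrite inE; apply/forallP => k.
rewrite /run_pattern /=; case: eqP => [/val_inj -> | _]; first by rewrite inE.
case: ifP => // k_in; rewrite inE -!sym_tnth; apply: (allP all_pair).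
by rewrite mem_iota; lia.
Qed.

Lemma card_not_rll_le :
  #|[set x : n.-tuple 'I_q | ~~ rll m x]| <= (n - m) * (q * (2 ^ m * q ^ (n - m - 1))).
Proof.
have sub_runs : [set x : n.-tuple 'I_q | ~~ rll m x]
    \subset \bigcup_(i : 'I_(n - m)) \bigcup_(a : 'I_q) long_run_at i a.
  apply/subsetP => x; rewrite inE => /not_rll_long_run[i [a x_in]].
  by apply/bigcupP; exists i => //; apply/bigcupP; exists a.
apply: leq_trans (subset_leq_card sub_runs) _; set b := 2 ^ m * _.
apply: leq_trans (card_bigcup_le _ _) _.
rewrite -[n - m in X in _ <= X]card_ord -sum_nat_const; apply: leq_sum => i _.
apply: leq_trans (card_bigcup_le _ _) _.
rewrite -[q in q * _]card_ord -sum_nat_const; apply: leq_sum => a _.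
by apply: card_long_run_at; have := ltn_ord i; lia.
Qed.

End LongRuns.

Lemma long_run_count_le p n m : 0 < m -> n <= p ^ m.-1 ->
  (n - m) * (2 * p * (2 ^ m * (2 * p) ^ (n - m - 1))) <= 2 * (2 * p) ^ n.-1.
Proof.
move=> m_gt0 n_le; case: (leqP n m) => [|m_lt_n]; first by rewrite -subn_eq0 => /eqP ->.
have -> : (2 * p) ^ n.-1 = 2 ^ m * (p * p ^ m.-1) * (2 * p) ^ (n - m - 1).
  by rewrite -expnS prednK // -expnMn -expnD; congr (_ ^ _); lia.
have : n - m <= p ^ m.-1 by exact: leq_trans (leq_subr m n) n_le.
move: (2 ^ m) (p ^ m.-1) ((2 * p) ^ (n - m - 1)) => A D X.
nia.
Qed.

Local Open Scope ring_scope.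

Theorem lemma11 (q n m : nat) :
  (4 <= q)%N -> ~~ odd q -> (1 <= n)%N ->
  (up_log q./2 n + 1 <= m)%N ->
  (q%:R ^+ n - 2 * q%:R ^+ n.-1 <= (B q n m)%:R :> rat) /\
  ((q%:R ^+ n) / 2 <= q%:R ^+ n - 2 * q%:R ^+ n.-1 :> rat).
Proof.
move=> q_ge4 q_even n_gt0 m_ge; set p := q./2 in m_ge.
have q_2p : q = (2 * p)%N by rewrite /p mul2n -{1}(odd_double_half q) (negbTE q_even).
have p_gt1 : (1 < p)%N by lia.
have n_le : (n <= p ^ m.-1)%N.
  by apply: leq_trans (up_logP n p_gt1) _; rewrite leq_pexp2l //; lia.
set bad := [set x : n.-tuple 'I_q | ~~ rll m x].
have bad_le : (#|bad| <= 2 * q ^ n.-1)%N.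
  apply: leq_trans (card_not_rll_le q n m) _; rewrite q_2p.
  by apply: long_run_count_le; lia.
have B_add_bad : (B q n m + #|bad| = q ^ n)%N.
  have := cardsC [set x : n.-tuple 'I_q | rll m x]; rewrite card_tuple card_ord => <-.
  by congr (_ + _); apply: eq_card => x; rewrite !inE.
have q_ge4R : (4 : rat) <= q%:R by rewrite (ler_nat rat 4 q).
have qn_ge0 : (0 : rat) <= q%:R ^+ n.-1 by rewrite exprn_ge0 ?ler0n.
have qnE : (q%:R ^+ n : rat) = q%:R * q%:R ^+ n.-1 by rewrite -exprS prednK.
split; last by rewrite qnE; nra.
have := congr1 (fun k => k%:R : rat) B_add_bad; rewrite natrD natrX => B_eq.
have : (#|bad|%:R : rat) <= 2 * q%:R ^+ n.-1 by rewrite -natrX -natrM ler_nat.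
lra.
Qed.
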